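(* Let $\mathcal{C}$ be a locally small category. For each object $X \in \mathcal{I}\mathcal{C}$ and objects $a, b \in \mathcal{C}$, the actions of $\pi_1$ and $\pi_2$ on morphisms give bijections $\pi_1 \colon \mathcal{I}\mathcal{C}(Ya, X) \to \mathcal{P}\mathcal{C}(Ya, X^+)$ and $\pi_2 \colon \mathcal{I}\mathcal{C}(X, Yb) \to \mathcal{P}^\dagger\mathcal{C}(X^-, Yb)$.
   Context: $\mathcal{P}\mathcal{C} \subseteq [\mathcal{C}^{op}, \mathbf{Set}]$ is the full subcategory of small presheaves (small colimits of representables), and $\mathcal{P}^\dagger\mathcal{C} = \mathcal{P}(\mathcal{C}^{op})^{op} \subseteq [\mathcal{C}, \mathbf{Set}]^{op}$. The Isbell envelope $\mathcal{I}\mathcal{C}$ has objects triples $X = (X^+, X^-, \xi^X)$ with $X^+ \in \mathcal{P}\mathcal{C}$, $X^- \in \mathcal{P}^\dagger\mathcal{C}$, and $\xi^X_{ab} \colon X^-(b) \times X^+(a) \to \mathcal{C}(a,b)$ natural in $a, b$; a morphism $X \to Y$ is a pair $(f^+, f^-)$ with $f^+ \colon X^+ \to Y^+$ in $\mathcal{P}\mathcal{C}$ and $f^- \colon X^- \to Y^-$ in $\mathcal{P}^\dagger\mathcal{C}$ (i.e. a natural transformation $Y^- \to X^-$) such that $\xi^Y_{ab}\circ(1 \times f^+_a) = \xi^X_{ab} \circ (f^-_b \times 1)$ on $Y^-(b) \times X^+(a)$ for all $a,b$. The functors $\pi_1 \colon \mathcal{I}\mathcal{C}\to\mathcal{P}\mathcal{C}$,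 $\pi_2\colon\mathcal{I}\mathcal{C}\to\mathcal{P}^\dagger\mathcal{C}$ are the projections $X\mapsto X^+$, $X\mapsto X^-$. The Yoneda embeddings are $Y \colon \mathcal{C} \to \mathcal{P}\mathcal{C}$, $c \mapsto \mathcal{C}(-,c)$; $Y \colon \mathcal{C} \to \mathcal{P}^\dagger\mathcal{C}$, $c\mapsto\mathcal{C}(c,-)$; and $Y \colon \mathcal{C} \to \mathcal{I}\mathcal{C}$, $c \mapsto (\mathcal{C}(-,c), \mathcal{C}(c,-), \circ)$ where $\circ \colon \mathcal{C}(c,b)\times\mathcal{C}(a,c)\to\mathcal{C}(a,b)$ is composition; so $\pi_1 Y = Y$ and $\pi_2 Y = Y$. *)

From mathcomp Require Import ssreflect ssrfun.

Unset Implicit Arguments.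
Unset Strict Implicit.

Record Category := {
  Obj :> Type;
  Hom : Obj -> Obj -> Type;
  idm : forall a, Hom a a;
  comp : forall a b c, Hom b c -> Hom a b -> Hom a c;
  comp_idl : forall a b (f : Hom a b), comp _ _ _ (idm b) f = f;
  comp_idr : forall a b (f : Hom a b), comp _ _ _ f (idm a) = f;
  comp_assoc : forall a b c d (h : Hom c d) (g : Hom b c) (f : Hom a b),
      comp _ _ _ h (comp _ _ _ g f) = comp _ _ _ (comp _ _ _ h g) f
}.
Arguments Hom {C} a b : rename.
Arguments idm {C} a : rename.
Arguments comp {C a b c} g f : rename.

Section Presheaves.
Variable C : Category.

Record Presheaf := {
  ps_ob :> C -> Type;
  ps_map : forall a b, Hom a b -> ps_ob b -> ps_ob a;
  ps_id : forall a x, ps_map a a (idm a) x = x;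
  ps_comp : forall a b c (g : Hom b c) (f : Hom a b) x,
      ps_map a c (comp g f) x = ps_map a b f (ps_map b c g x)
}.

Arguments ps_map p {a b} f x : rename.

Record Copresheaf := {
  cp_ob :> C -> Type;
  cp_map : forall a b, Hom a b -> cp_ob a -> cp_ob b;
  cp_id : forall a x, cp_map a a (idm a) x = x;
  cp_comp : forall a b c (g : Hom b c) (f : Hom a b) x,
      cp_map a c (comp g f) x = cp_map b c g (cp_map a b f x)
}.

Arguments cp_map p {a b} f x : rename.

Record PHom (X Y : Presheaf) := {
  pn :> forall a, X a -> Y a;
  pn_nat : forall a b (f : Hom a b) (x : X b),
      pn a (ps_map X f x) = ps_map Y f (pn b x)
}.

Arguments pn {X Y} p a x : rename.

Record CNat (F G : Copresheaf) := {
  cn :> forall a, F a -> G a;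
  cn_nat : forall a b (f : Hom a b) (x : F a),
      cn b (cp_map F f x) = cp_map G f (cn a x)
}.

Arguments cn {F G} c a x : rename.

(** Morphisms X -> Y in  P^dagger C = P(C^op)^op  are natural
    transformations  Y -> X. *)
Definition PdHom (X Y : Copresheaf) := CNat Y X.

Definition YP (c : C) : Presheaf.
Proof.
refine {| ps_ob := fun a => Hom a c;
          ps_map := fun a b (f : Hom a b) (g : Hom b c) => comp g f |}.
- by move=> a x; rewrite comp_idr.
- by move=> a b d g f x; rewrite comp_assoc.
Defined.

Definition YPd (c : C) : Copresheaf.
Proof.
refine {| cp_ob := fun b => Hom c b;
          cp_map := fun a b (f : Hom a b) (g : Hom c a) => comp f g |}.
- by move=> a x; rewrite comp_idl.
- by move=> a b d g f x; rewrite comp_assoc.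
Defined.

(** Objects of the Isbell envelope  I C :  triples (X^+, X^-, xi) with
    xi_{ab} : X^-(b) x X^+(a) -> C(a,b) natural in a and b. *)
Record IObj := {
  Xp : Presheaf;
  Xm : Copresheaf;
  xi : forall a b, Xm b -> Xp a -> Hom a b;
  xi_nat_a : forall a a' b (f : Hom a' a) (y : Xm b) (x : Xp a),
      xi a' b y (ps_map Xp f x) = comp (xi a b y x) f;
  xi_nat_b : forall a b b' (g : Hom b b') (y : Xm b) (x : Xp a),
      xi a b' (cp_map Xm g y) x = comp g (xi a b y x)
}.
Arguments xi i a b y x : rename.

Arguments Xp i : rename.
Arguments Xm i : rename.

Record IHom (X Y : IObj) := {
  fp : PHom (Xp X) (Xp Y);
  fm : PdHom (Xm X) (Xm Y);
  ihom_compat : forall a b (y : Xm Y b) (x : Xp X a),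
      xi Y a b y (fp a x) = xi X a b (fm b y) x
}.

Arguments fp {X Y} h : rename.
Arguments fm {X Y} h : rename.

Definition YI (c : C) : IObj.
Proof.
refine {| Xp := YP c; Xm := YPd c;
          xi := fun a b (g : Hom c b) (f : Hom a c) => comp g f |}.
- by move=> a a' b f y x /=; rewrite comp_assoc.
- by move=> a b b' g y x /=; rewrite comp_assoc.
Defined.

Definition pi1 (X Y : IObj) (f : IHom X Y) : PHom (Xp X) (Xp Y) := fp f.
Definition pi2 (X Y : IObj) (f : IHom X Y) : PdHom (Xm X) (Xm Y) := fm f.

End Presheaves.

Arguments YP {C} c.
Arguments YPd {C} c.
Arguments YI {C} c.
Arguments pi1 {C X Y} f.
Arguments pi2 {C X Y} f.

Arguments ps_ob {C} p c : rename.
Arguments ps_map {C} p {a b} f x : rename.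
Arguments cp_ob {C} p c : rename.
Arguments cp_map {C} p {a b} f x : rename.
Arguments pn {C X Y} p a x : rename.
Arguments cn {C F G} c a x : rename.
Arguments Xp {C} i : rename.
Arguments Xm {C} i : rename.
Arguments xi {C} i a b y x : rename.
Arguments fp {C X Y} h : rename.
Arguments fm {C X Y} h : rename.

(* Both bijections are instances of the Yoneda lemma.  For a morphism
   h : Ya -> X of I C, the compatibility condition evaluated at the identity
   of a forces h^-_b(y) = xi_{ab}(y, h^+_a(1_a)), so h is determined by h^+,
   and conversely every h^+ : Ya -> X^+ extends in this way to a morphism of
   I C by naturality of xi.  Dually, a morphism X -> Yb is determined by its
   component h^-, through h^+_c(x) = xi_{cb}(h^-_b(1_b), x). *)
From mathcomp Require Import ssreflect ssrfun.
From Stdlib Require Import FunctionalExtensionality ProofIrrelevance.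

Section IsbellYoneda.
Variable C : Category.

Lemma PHom_eq (X Y : Presheaf C) (f g : PHom C X Y) :
  (forall a x, pn f a x = pn g a x) -> f = g.
Proof.
case: f g => f f_nat [g g_nat] /= ext_fg.
have efg : f = g.
  by apply: functional_extensionality_dep => a; apply: functional_extensionality.
by subst g; congr Build_PHom; apply: proof_irrelevance.
Qed.

Lemma CNat_eq (F G : Copresheaf C) (f g : CNat C F G) :
  (forall a x, cn f a x = cn g a x) -> f = g.
Proof.
case: f g => f f_nat [g g_nat] /= ext_fg.
have efg : f = g.
  by apply: functional_extensionality_dep => a; apply: functional_extensionality.
by subst g; congr Build_CNat; apply: proof_irrelevance.
Qed.

Lemma IHom_eq (X Y : IObj C) (f g : IHom C X Y) :
  fp f = fp g -> fm f = fm g -> f = g.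
Proof.
case: f g => fp1 fm1 compat1 [fp2 fm2 compat2] /= ep em.
by subst fp2 fm2; congr Build_IHom; apply: proof_irrelevance.
Qed.

Section FromRepresentable.
Variables (X : IObj C) (a : C).

Lemma fm_from_YI (h : IHom C (YI a) X) b (y : Xm X b) :
  cn (fm h) b y = xi X a b y (fp h a (idm a)).
Proof. by rewrite (ihom_compat _ _ _ h) /= comp_idr. Qed.

Definition IHom_of_PHom (g : PHom C (YP a) (Xp X)) : IHom C (YI a) X.
Proof.
pose gm := {| cn := fun b (y : Xm X b) => xi X a b y (g a (idm a)) : YPd a b;
              cn_nat := fun b b' f y => xi_nat_b C X a b b' f y _ |}.
refine {| fp := g : PHom C (Xp (YI a)) (Xp X);
          fm := gm : PdHom C (Xm (YI a)) (Xm X) |}.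
move=> c b y x /=.
have -> : g c x = g c (ps_map (YP a) x (idm a)) by rewrite /= comp_idl.
by rewrite pn_nat xi_nat_a.
Defined.

Lemma pi1_bij : bijective (@pi1 C (YI a) X).
Proof.
exists IHom_of_PHom => [h|//].
by apply: IHom_eq => //; apply: CNat_eq => b y; rewrite (fm_from_YI h).
Qed.

End FromRepresentable.

Section ToRepresentable.
Variables (X : IObj C) (b : C).

Lemma fp_to_YI (h : IHom C X (YI b)) c (x : Xp X c) :
  pn (fp h) c x = xi X c b (cn (fm h) b (idm b)) x.
Proof. by rewrite -(ihom_compat _ _ _ h) /= comp_idl. Qed.

Definition IHom_of_PdHom (k : PdHom C (Xm X) (YPd b)) : IHom C X (YI b).
Proof.
pose kp := {| pn := fun c (x : Xp X c) => xi X c b (k b (idm b)) x : YP b c;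
              pn_nat := fun c c' f x => xi_nat_a C X c' c b f _ x |}.
refine {| fp := kp : PHom C (Xp X) (Xp (YI b));
          fm := k : PdHom C (Xm X) (Xm (YI b)) |}.
move=> c d y x /=.
have -> : k d y = k d (cp_map (YPd b) y (idm b)) by rewrite /= comp_idr.
by rewrite cn_nat xi_nat_b.
Defined.

Lemma pi2_bij : bijective (@pi2 C X (YI b)).
Proof.
exists IHom_of_PdHom => [h|//].
by apply: IHom_eq => //; apply: PHom_eq => c x; rewrite (fp_to_YI h).
Qed.

End ToRepresentable.

End IsbellYoneda.

Theorem lemma3p2 (C : Category) (X : IObj C) (a b : C) :
  bijective (@pi1 C (YI a) X : IHom C (YI a) X -> PHom C (YP a) (Xp X)) /\
  bijective (@pi2 C X (YI b) : IHom C X (YI b) -> PdHom C (Xm X) (YPd b)).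
Proof. split; [exact: pi1_bij | exact: pi2_bij]. Qed.
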